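(* For every signed permutation $\pi\in\mathfrak{B}_n$, \[\mathfrak{d}_B(\pi)=2^{\operatorname{pe}_B(\pi)+\varsigma(\pi)}\sum_{\substack{D\subseteq\{0,1,\dots,n-1\}\\ \operatorname{Pe}_B(\pi)\subseteq D\,\triangle\,(D+1)\\ \pi(1)<0\ \Rightarrow\ 0\in D}}L_D,\] where $D+1=\{d+1:d\in D\}$ and $\triangle$ is symmetric difference.
   Context: $\mathfrak{B}_n$ is the group of signed permutations (bijections $\pi$ of $\{-n,\dots,n\}$ with $\pi(-i)=-\pi(i)$), written as words, with $\pi(0)=0$. $\operatorname{Pe}_B(\pi)$ is the set of $i\in\{1,\dots,n-1\}$ with $\pi(i-1)<\pi(i)>\pi(i+1)$, $\operatorname{pe}_B(\pi)=|\operatorname{Pe}_B(\pi)|$, and $\varsigma(\pi)$ is $0$ if $\pi(1)>0$ and $1$ if $\pi(1)<0$. Work in formal power series in commuting variables $z_0,z_1,\dots$. For $E=\{e_1<\dots<e_m\}\subseteq\{0,\dots,n-1\}$ put $e_{m+1}=n$ and $N_E=\sum_{0<i_1<\dots<i_m}z_0^{e_1}\prod_{r=1}^m z_{i_r}^{e_{r+1}-e_r}$ (so $N_\emptyset=z_0^n$), and $L_D=\sum_{D\subseteq T\subseteq\{0,\dots,n-1\}}N_T$. Let $Z$ be the totally ordered set $0<\bar1<1<\bar2<2<\cdots$, with $0$ and unbarred $j$ ''plus-type'' and barred $\bar j$ ''minus-type'', and $|0|=0$, $|\bar j|=|j|=j$. Define $\mathfrak{d}_B(\pi)=\sum\prod_{s=1}^n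 z_{|a_s|}$, summed over all sequences $(a_1,\dots,a_n)\in Z^n$ such that, with $a_0=0$, $a_0\le a_1\le\dots\le a_n$ and for each $s\in\{0,\dots,n-1\}$: if $\pi(s)<\pi(s+1)$ then $a_s<a_{s+1}$ or ($a_s=a_{s+1}$ is plus-type); if $\pi(s)>\pi(s+1)$ then $a_s<a_{s+1}$ or ($a_s=a_{s+1}$ is minus-type). *)

From mathcomp Require Import all_boot all_order all_algebra.
Set Implicit Arguments. Unset Strict Implicit. Unset Printing Implicit Defensive.
Import Order.TTheory GRing.Theory Num.Theory.

(* Signed permutations, written as words w = [pi(1); ...; pi(n)] of ints  *)
(* with |pi(1)|,...,|pi(n)| a permutation of 1..n.  pi(0) = 0.            *)
Definition is_signed_perm (n : nat) (w : seq int) : bool :=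
  perm_eq (map absz w) (iota 1 n).

Definition piv (w : seq int) (i : nat) : int :=
  if i is j.+1 then nth 0%R w j else 0%R.

Definition PeB (n : nat) (w : seq int) : seq nat :=
  [seq i <- iota 1 n.-1 | (piv w i.-1 < piv w i)%R && (piv w i.+1 < piv w i)%R].

Definition peB (n : nat) (w : seq int) : nat := size (PeB n w).

Definition varsigma (w : seq int) : nat := (piv w 1 < 0)%R.

(* Formal power series in commuting variables z_0, z_1, ... with          *)
(* nonnegative integer coefficients are represented by their coefficient  *)
(* function  seq nat -> nat : the monomial z_{x_1} ... z_{x_k} is encoded *)
(* by the sorted list [x_1 <= ... <= x_k] of its variable indices (with   *)
(* multiplicity).  The monomial of an arbitrary list s of indices is      *)
(* sort leq s.  A sum  Sum_t  prod(word t)  has coefficient at m the      *)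
(* number of t with sort leq (word t) = m.  Each sum below ranges over a  *)
(* countable family; for a fixed m only finitely many terms can produce   *)
(* m, and we count over an explicit finite range containing them all.     *)
Definition maxl (m : seq nat) : nat := foldr maxn 0 m.

(* The totally ordered set Z = 0 < 1bar < 1 < 2bar < 2 < ... is encoded   *)
(* by nat codes: 0 |-> 0, jbar |-> 2j-1, j |-> 2j (j >= 1).  This is an   *)
(* order isomorphism onto nat.  |c| = uphalf c; plus-type iff c is even.  *)
Definition Zabs (c : nat) : nat := uphalf c.
Definition Zplus (c : nat) : bool := ~~ odd c.
Definition Zminus (c : nat) : bool := odd c.

Definition dB_valid (n : nat) (w : seq int) (a : seq nat) : bool :=
  let a' := 0 :: a in
  [forall s : 'I_n,
     let x := nth 0 a' s in let y := nth 0 a' s.+1 in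
     [&& x <= y,
         (piv w s < piv w s.+1)%R ==> ((x < y) || ((x == y) && Zplus x))
       & (piv w s.+1 < piv w s)%R ==> ((x < y) || ((x == y) && Zminus x))]].

(* |a_s| in m, hence code a_s <= 2 * max m.                               *)
Definition coef_dB (n : nat) (w : seq int) (m : seq nat) : nat :=
  #|[pred a : n.-tuple 'I_(2 * maxl m).+1 |
       dB_valid n w (map val a) && (sort leq (map Zabs (map val a)) == m)]|.

(* The word of the term of N_E indexed by 0 < i_1 < ... < i_k, where      *)
(* es = [e_1 < ... < e_k] and e_{k+1} = n:                                *)
(*   z_0^{e_1} prod_r z_{i_r}^{e_{r+1} - e_r}.                            *)
Definition NE_word (n : nat) (es ix : seq nat) : seq nat :=
  nseq (nth n es 0) 0 ++
  flatten [seq nseq (nth n es r.+1 - nth n es r) (nth 0 ix r)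
          | r <- iota 0 (size es)].

Definition elems (n : nat) (E : {set 'I_n}) : seq nat :=
  sort leq [seq val i | i in E].

(* (exponent e_{r+1} - e_r > 0), hence i_r <= max m.                      *)
Definition coef_N (n : nat) (E : {set 'I_n}) (m : seq nat) : nat :=
  let es := elems E in
  #|[pred ix : (size es).-tuple 'I_(maxl m).+1 |
       sorted ltn (0 :: map val ix)
       && (sort leq (NE_word n es (map val ix)) == m)]|.

Definition coef_L (n : nat) (D : {set 'I_n}) (m : seq nat) : nat :=
  \sum_(T : {set 'I_n} | D \subset T) coef_N T m.

Definition admissible (n : nat) (w : seq int) (D : {set 'I_n}) : bool :=
  let Dn := [seq val i | i in D] in
  let D1 := [seq (val i).+1 | i in D] in
  all (fun i => (i \in Dn) (+) (i \in D1)) (PeB n w)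
  && ((piv w 1 < 0)%R ==> (0 \in Dn)).

From mathcomp Require Import all_boot all_order all_algebra.
From mathcomp Require Import zify.
Set Implicit Arguments. Unset Strict Implicit. Unset Printing Implicit Defensive.
Import Order.TTheory.

(* Fix a monomial m.  On the right, the N_E form a basis of the monomials: N_T has
   coefficient 1 at m exactly when m is weakly increasing of length n and T is the set
   of its rises (positions s with m_(s-1) < m_s, where m_(-1) = 0).  So the right-hand
   side counts the sets D of rises of m meeting the peak conditions, with weight
   2 per peak, the condition pi(1) < 0 ==> 0 \in D acting as a virtual peak at 0.
   On the left, a term of d_B(pi) at m is a choice of bars on the letters of m
   compatible with the ascents and descents of pi.  Both counts are computed by
   transfer recursions along the word, and once a barred letter is matched with a
   step in D the two recursions coincide. *)

Lemma card_tuple_cons (T : finType) k (P : pred (seq T)) :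
  #|[pred t : k.+1.-tuple T | P t]| =
  \sum_(x : T) #|[pred t : k.-tuple T | P (x :: t)]|.
Proof.
rewrite -[LHS]sum1_card (eq_bigr (fun x => \sum_(t : k.-tuple T | P (x :: t)) 1));
  last by move=> x _; rewrite sum1_card.
rewrite pair_big_dep /= (reindex (fun p : T * k.-tuple T => [tuple of p.1 :: p.2])) /=.
  by apply: eq_bigl => -[x t].
exists (fun t : k.+1.-tuple T => (thead t, [tuple of behead t])).
  by move=> [x t] _ /=; rewrite theadE; congr pair; apply: val_inj.
by move=> t _; rewrite [in RHS](tuple_eta t).
Qed.

Lemma card_tuple_nil (T : finType) (P : pred (seq T)) :
  #|[pred t : 0.-tuple T | P t]| = P [::].
Proof.
rewrite -[LHS]sum1_card big_mkcond /= (eq_bigr (fun _ => (P [::] : nat))).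
  by rewrite sum_nat_const card_tuple; case: (P [::]).
by move=> t _; rewrite tuple0.
Qed.

Lemma card_andbl (T : finType) (b : bool) (P : pred T) :
  #|[pred t | b && P t]| = b * #|[pred t | P t]|.
Proof. by case: b; rewrite ?mul1n ?mul0n //; apply: eq_card0. Qed.

Lemma sum_nat_bool (T : finType) (P b : pred T) :
  \sum_(i | P i) (b i : nat) = #|[pred i | P i && b i]|.
Proof.
rewrite -sum1_card [RHS]big_mkcond [LHS]big_mkcond; apply: eq_bigr => i _.
by rewrite inE; case: (P i); case: (b i).
Qed.

Lemma card_set_tuple n (R : pred {set 'I_n}) :
  #|[pred D | R D]| = #|[pred t : n.-tuple bool | R [set i | tnth t i]]|.
Proof.
rewrite -!sum1_card (reindex (fun t : n.-tuple bool => [set i | tnth t i])) //.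
exists (fun D : {set 'I_n} => [tuple i \in D | i < n]) => [t _ | D _].
  by apply: eq_from_tnth => i; rewrite tnth_mktuple inE.
by apply/setP => i; rewrite !inE tnth_mktuple.
Qed.

Lemma card_val_tuple k M (L : seq nat) : size L = k -> all (fun x => x <= M) L ->
  #|[pred t : k.-tuple 'I_M.+1 | map val t == L]| = 1.
Proof.
move=> size_L small_L.
have size_inord : size (map (@inord M) L) == k by rewrite size_map size_L.
apply: (eq_card1 (x := Tuple size_inord)) => t; rewrite !inE.
have val_inord : map val (map (@inord M) L) = L.
  rewrite -map_comp -[RHS]map_id; apply/eq_in_map => x /(allP small_L) le_xM /=.
  by rewrite inordK.
apply/eqP/eqP => [val_t|->] //; apply: val_inj => /=.
by rewrite -val_t -map_comp -[LHS]map_id; apply: eq_map => i /=; rewrite inord_val.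
Qed.

Lemma map_in_const (T U : eqType) (f : T -> U) s x :
  {in s, forall j, f j = x} -> map f s = nseq (size s) x.
Proof.
by move=> fx; rewrite -(size_map f); apply/all_pred1P/allP => _ /mapP [j /fx -> ->] /=.
Qed.

Lemma ltn_sorted_nth (s : seq nat) i j : sorted ltn s -> i < size s -> j < size s ->
  (nth 0 s i < nth 0 s j) = (i < j).
Proof. by move=> sorted_s lt_i lt_j; apply: (lt_sorted_ltn_nth 0 sorted_s). Qed.

Lemma count_leq_mem (es : seq nat) j : uniq es ->
  count (fun e => e <= j) es = count (fun e => e < j) es + (j \in es).
Proof.
move=> uniq_es; rewrite -(count_uniq_mem j uniq_es) -count_predUI.
rewrite (@eq_count _ (predI _ _) pred0) ?count_pred0 ?addn0; last by move=> e /=; lia.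
by apply: eq_count => e /=; lia.
Qed.

Lemma count_ltn_index (es : seq nat) j : sorted ltn es -> j \in es ->
  count (fun e => e < j) es = index j es.
Proof.
elim: es => [|e es IH] //= sorted_es; have lt_e := order_path_min ltn_trans sorted_es.
rewrite in_cons => /predU1P [->|j_es]; rewrite ?eqxx ?ltnn.
  by rewrite (@eq_in_count _ _ pred0) ?count_pred0 // => f /(allP lt_e) /=; lia.
have lt_ej : e < j := allP lt_e j j_es.
by rewrite lt_ej (ltn_eqF lt_ej) IH ?(path_sorted sorted_es).
Qed.

Lemma nth_maxl (m : seq nat) i : nth 0 m i <= maxl m.
Proof.
elim: m i => [|x m IH] [|i] //=; first by rewrite leq_maxl.
by rewrite (leq_trans (IH i)) ?leq_maxr.
Qed.

Definition zstep (u : bool) (x y : nat) : bool :=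
  [&& x <= y, u ==> (x < y) || (x == y) && ~~ odd x
            & ~~ u ==> (x < y) || (x == y) && odd x].

Lemma zstep_leq u x y : zstep u x y -> x <= y.
Proof. by case/andP. Qed.

Lemma zstep_lt u x y : x < y -> zstep u x y.
Proof. by move=> lt_xy; rewrite /zstep (ltnW lt_xy) lt_xy; case: u. Qed.

Lemma zstep_gt u x y : y < x -> zstep u x y = false.
Proof. by move=> lt_yx; rewrite /zstep leqNgt lt_yx. Qed.

Lemma zstep_refl u x : zstep u x x = (if u then ~~ odd x else odd x).
Proof. by rewrite /zstep leqnn ltnn eqxx; case: u; case: (odd x). Qed.

Definition zcodes (v : nat) : seq nat := if v is 0 then [:: 0] else [:: v.*2.-1; v.*2].

Lemma mem_zcodes v y : (y \in zcodes v) = (uphalf y == v).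
Proof. by case: v => [|v]; rewrite !inE; lia. Qed.

Lemma zcodes_uniq v : uniq (zcodes v).
Proof. by case: v => [|v] //=; rewrite inE; lia. Qed.

Lemma big_uphalf_zcodes B v (F : nat -> nat) : v.*2 < B ->
  \sum_(y < B | uphalf y == v) F y = \sum_(y <- zcodes v) F y.
Proof.
move=> lt_vB; rewrite -(big_mkord (fun y => uphalf y == v)) -big_filter.
apply: perm_big; apply: uniq_perm; rewrite ?filter_uniq ?iota_uniq ?zcodes_uniq //.
by move=> y; rewrite mem_filter mem_index_iota mem_zcodes; lia.
Qed.

Lemma big_zcodes_gt0 v (F : nat -> nat) : 0 < v ->
  \sum_(y <- zcodes v) F y = F v.*2.-1 + F v.*2.
Proof. by case: v => // v _; rewrite !big_cons big_nil addn0. Qed.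

Fixpoint zchain (x : nat) (us : seq bool) (c : seq nat) : bool :=
  match us, c with
  | [::], [::] => true
  | u :: us', y :: c' => zstep u x y && zchain y us' c'
  | _, _ => false
  end.

Lemma zchainP c : forall x us, zchain x us c =
  (size us == size c) &&
  all (fun s => zstep (nth false us s) (nth 0 (x :: c) s) (nth 0 c s)) (iota 0 (size c)).
Proof.
elim: c => [|y c IH] x [|u us] //=.
by rewrite IH -[1]/(1 + 0) iotaDl all_map eqSS andbCA.
Qed.

Lemma zchain_path x us c : zchain x us c -> path leq x c.
Proof. by elim: c x us => [|y c IH] x [|u us] //= /andP [/zstep_leq -> /IH]. Qed.

Definition nchains k B x us (vs : seq nat) : nat :=
  #|[pred c : k.-tuple 'I_B |
     zchain x us (map val c) && (map uphalf (map val c) == vs)]|.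

Lemma nchains0 B x us vs : nchains 0 B x us vs = (us == [::]) && (vs == [::]).
Proof.
rewrite /nchains (card_tuple_nil (fun c : seq 'I_B =>
  zchain x us (map val c) && (map uphalf (map val c) == vs))).
by case: us; case: vs.
Qed.

Lemma nchains_cons_nil B k x u us : nchains k.+1 B x (u :: us) [::] = 0.
Proof. by rewrite /nchains; apply: eq_card0 => -[[|y c] sz]; rewrite !inE /= ?andbF. Qed.

Lemma nchains_cons B k x u us v vs : v.*2 < B ->
  nchains k.+1 B x (u :: us) (v :: vs) =
  \sum_(y <- zcodes v) zstep u x y * nchains k B y us vs.
Proof.
move=> lt_vB; rewrite /nchains (card_tuple_cons _ (fun c : seq 'I_B =>
  zchain x (u :: us) (map val c) && (map uphalf (map val c) == v :: vs))).
rewrite -(@big_uphalf_zcodes B v (fun y => zstep u x y * nchains k B y us vs)) //.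
rewrite [RHS]big_mkcond; apply: eq_bigr => y _ /=.
have [<-|ne_yv] := eqVneq (uphalf y) v; last first.
  by apply: eq_card0 => c; rewrite !inE eqseq_cons (negbTE ne_yv) andbF.
rewrite /nchains -card_andbl; apply: eq_card => c.
by rewrite !inE eqseq_cons eqxx; case: (zstep u x y).
Qed.

(* A word t of bits marks which steps belong to D.  The state (pv, d, u) records the
   value of m, the bit of t and the ascent bit at the previous step; starting from
   u = true turns the condition pi(1) < 0 ==> 0 \in D into a peak condition at 0. *)
Fixpoint dchain (pv : nat) (d u : bool) (us : seq bool) (vs : seq nat) (t : seq bool)
  : bool :=
  match us, vs, t with
  | [::], [::], [::] => true
  | u' :: us', v :: vs', e :: t' =>
      [&& pv <= v, e ==> (pv < v), (u && ~~ u') ==> (e != d) & dchain v e u' us' vs' t']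
  | _, _, _ => false
  end.

Lemma dchainP t : forall pv d u us vs, dchain pv d u us vs t =
  [&& size us == size t, size vs == size t,
   all (fun s => nth 0 (pv :: vs) s <= nth 0 vs s) (iota 0 (size t)),
   all (fun s => nth false t s ==> (nth 0 (pv :: vs) s < nth 0 vs s)) (iota 0 (size t)) &
   all (fun s => (nth false (u :: us) s && ~~ nth false us s) ==>
                 (nth false t s != nth false (d :: t) s)) (iota 0 (size t))].
Proof.
elim: t => [|e t IH] pv d u [|u' us] [|v vs] //=; first by rewrite !andbF.
rewrite IH -[1]/(1 + 0) iotaDl !all_map !eqSS.
by case: (pv <= v); case: (e ==> _); case: (u && ~~ u' ==> _); rewrite /= ?andbF.
Qed.

Definition ndchains k pv d u us vs : nat := #|[pred t : k.-tuple bool | dchain pv d u us vs t]|.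

Lemma ndchains_cons k pv d u u' us v vs :
  ndchains k.+1 pv d u (u' :: us) (v :: vs) =
  \sum_(e : bool) [&& pv <= v, e ==> (pv < v) & (u && ~~ u') ==> (e != d)] *
                  ndchains k v e u' us vs.
Proof.
rewrite /ndchains (card_tuple_cons _ (fun t => dchain pv d u (u' :: us) (v :: vs) t)).
by apply: eq_bigr => e _; rewrite -card_andbl; apply: eq_card => t; rewrite !inE /= !andbA.
Qed.

Fixpoint npeaks (u : bool) (us : seq bool) : nat :=
  if us is u' :: us' then (u && ~~ u') + npeaks u' us' else 0.

Lemma npeaksE u us :
  npeaks u us = count (fun s => nth false (u :: us) s && ~~ nth false us s) (iota 0 (size us)).
Proof. by elim: us u => [|u' us IH] u //=; rewrite IH -[1]/(1 + 0) iotaDl count_map. Qed.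

(** * The transfer recursion *)

Fixpoint wcount (pv : nat) (d u : bool) (us : seq bool) (vs : seq nat) : nat :=
  match us, vs with
  | [::], [::] => 1
  | u' :: us', v :: vs' =>
      let peak := u && ~~ u' in
      (pv <= v) * ((if peak then 2 * d else 1) * wcount v false u' us' vs'
                   + (pv < v) * (if peak then 2 * ~~ d else 1) * wcount v true u' us' vs')
  | _, _ => 0
  end.

Lemma ndchains_wcount us : forall vs pv d u,
  ndchains (size us) pv d u us vs * 2 ^ npeaks u us = wcount pv d u us vs.
Proof.
elim: us => [|u' us IH] [|v vs] pv d u.
- by rewrite /ndchains (card_tuple_nil (fun t => dchain pv d u [::] [::] t)).
- by rewrite /ndchains (card_tuple_nil (fun t => dchain pv d u [::] (v :: vs) t)).
- rewrite /ndchains (card_tuple_cons _ (fun t => dchain pv d u (u' :: us) [::] t)) big1 //.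
  by move=> e _; apply: eq_card0 => t; rewrite !inE.
- rewrite /= ndchains_cons big_bool /= expnD -(IH vs v true u') -(IH vs v false u').
  by case: u; case: u'; case: d; case: (pv <= v); case: (pv < v); rewrite /=; nia.
Qed.

Lemma wcount_descentE pv d us vs : wcount pv d false us vs = wcount pv false false us vs.
Proof. by case: us vs => [|u us] [|v vs]. Qed.

Lemma wcount_ascent_sum pv d us vs :
  wcount pv true true us vs + wcount pv false true us vs = 2 * wcount pv d false us vs.
Proof.
case: us vs => [|u us] [|v vs] //=.
by case: u; case: d; case: (pv <= v); case: (pv < v); rewrite /=; lia.
Qed.

(* A code x behaves like a labelling state whose previous step is an ascent, with
   value uphalf x and belonging to D exactly when x is barred. *)
Lemma nchains_wcount B us : forall vs x pv,
  all (fun v => v.*2 < B) vs -> uphalf x = pv ->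
  nchains (size us) B x us vs = wcount pv (odd x) true us vs.
Proof.
elim: us => [|u us IH] [|v vs] x pv //=; rewrite ?nchains0 ?nchains_cons_nil //.
case/andP=> lt_vB small_vs abs_x; rewrite nchains_cons //.
have unbarred : nchains (size us) B v.*2 us vs = wcount v false true us vs.
  by rewrite (IH _ _ v) ?odd_double //; lia.
have barred : 0 < v -> nchains (size us) B v.*2.-1 us vs = wcount v true true us vs.
  by move=> v_gt0; rewrite (IH _ _ v) //; [congr wcount; lia | lia].
have both d : 0 < v ->
    nchains (size us) B v.*2.-1 us vs + nchains (size us) B v.*2 us vs =
    2 * wcount v d false us vs.
  by move=> v_gt0; rewrite barred // unbarred (wcount_ascent_sum _ d).
have [lt_vx|lt_xv|eq_vx] := ltngtP v pv.
- rewrite big1_seq // => y; rewrite mem_zcodes => /eqP hy.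
  by rewrite zstep_gt //; lia.
- have v_gt0 : 0 < v by lia.
  rewrite big_zcodes_gt0 // !zstep_lt ?mul1n; try lia.
  case: u; first by rewrite barred // unbarred /= !mul1n addnC.
  by rewrite /= (both false) // (wcount_descentE v true); case: (odd x) => /=; lia.
- subst pv; have [v0|v_gt0] := posnP v.
    have x0 : x = 0 by lia.
    by subst x v; rewrite big_seq1 zstep_refl (IH _ _ 0) //; case: u => /=; lia.
  rewrite big_zcodes_gt0 //; have [odd_x|even_x] := boolP (odd x).
    have def_x : x = v.*2.-1 by lia.
    rewrite def_x in odd_x *; rewrite zstep_refl zstep_lt ?odd_x; last by lia.
    case: u => /=; first by rewrite unbarred; lia.
    by rewrite !mul1n (both false) //; lia.
  have -> : x = v.*2 by lia.
  rewrite zstep_gt ?zstep_refl ?odd_double; last by lia.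
  by case: u; rewrite /= ?unbarred //; lia.
Qed.

(** * The monomial expansion of N_E *)

Definition stepword n (es a : seq nat) : seq nat :=
  [seq nth 0 a (count (fun e => e <= j) es) | j <- iota 0 n].

Lemma NE_word_suffixE n es : forall p x0 ix,
  sorted ltn es -> all (fun e => p <= e < n) es -> p <= n -> size ix = size es ->
  nseq (nth n es 0 - p) x0 ++
  flatten [seq nseq (nth n es r.+1 - nth n es r) (nth 0 ix r) | r <- iota 0 (size es)] =
  [seq nth 0 (x0 :: ix) (count (fun e => e <= j) es) | j <- iota p (n - p)].
Proof.
elim: es => [|e es IH] p x0 [|x ix] //=.
  by move=> _ _ _ _; rewrite cats0 (map_in_const (x := x0)) ?size_iota.
move=> sorted_es /andP [/andP [le_pe lt_en] bounded_es] le_pn [size_ix].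
have lt_e : all (fun f => e < f) es := order_path_min ltn_trans sorted_es.
rewrite -[1]/(1 + 0) iotaDl -map_comp (IH e x ix) ?(path_sorted sorted_es) ?(ltnW lt_en) //;
  last by apply/allP => f f_es; move: (allP bounded_es f f_es) (allP lt_e f f_es); lia.
rewrite (_ : n - p = (e - p) + (n - e)); last by lia.
rewrite iotaD map_cat subnKC //; congr (_ ++ _).
  rewrite (map_in_const (x := x0)) ?size_iota // => j.
  rewrite mem_iota subnKC // => /andP [_ lt_je].
  rewrite leqNgt lt_je (@eq_in_count _ _ pred0) ?count_pred0 //.
  by move=> f /(allP lt_e) /=; lia.
by apply/eq_in_map => j; rewrite mem_iota => /andP [le_ej _] /=; rewrite le_ej.
Qed.

Lemma NE_wordE n es ix : sorted ltn es -> all (fun e => e < n) es -> size ix = size es ->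
  NE_word n es ix = stepword n es (0 :: ix).
Proof.
move=> sorted_es bounded_es size_ix; rewrite /NE_word -[nth n es 0]subn0.
by rewrite NE_word_suffixE ?subn0.
Qed.

Lemma size_stepword n es a : size (stepword n es a) = n.
Proof. by rewrite size_map size_iota. Qed.

Lemma nth_stepword n es a j : j < n ->
  nth 0 (stepword n es a) j = nth 0 a (count (fun e => e <= j) es).
Proof. by move=> lt_jn; rewrite (nth_map 0) ?size_iota // nth_iota. Qed.

Lemma nth_cons_stepword n es L j : j <= n ->
  nth 0 (0 :: stepword n es (0 :: L)) j = nth 0 (0 :: L) (count (fun e => e < j) es).
Proof.
case: j => [|j] le_jn /=; first by rewrite (@eq_count _ _ pred0) ?count_pred0.
by rewrite nth_stepword.
Qed.

Definition rises n (m : seq nat) : {set 'I_n} :=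
  [set s : 'I_n | nth 0 (0 :: m) s < nth 0 m s].

Section StepWord.

Variables (n : nat) (es : seq nat).
Hypotheses (sorted_es : sorted ltn es) (bounded_es : all (fun e => e < n) es).

Let uniq_es : uniq es := sorted_uniq ltn_trans ltnn sorted_es.

Section Values.

Variable L : seq nat.
Hypotheses (sorted_L : sorted ltn (0 :: L)) (size_L : size L = size es).

Let count_small (a : pred nat) : count a es < size (0 :: L).
Proof. by rewrite /= size_L ltnS count_size. Qed.

Lemma stepword_sorted : sorted leq (stepword n es (0 :: L)).
Proof.
apply: homo_sorted (iota_sorted 0 n) => i j lt_ij.
apply: (sorted_leq_nth leq_trans leqnn 0 (sub_sorted ltnW sorted_L));
  rewrite ?inE ?count_small //.
by apply: sub_count => e /= le_ei; rewrite (leq_trans le_ei) // ltnW.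
Qed.

Lemma rises_stepword : rises n (stepword n es (0 :: L)) = [set s : 'I_n | val s \in es].
Proof.
apply/setP => s; have le_sn := ltnW (ltn_ord s).
rewrite !inE nth_cons_stepword // nth_stepword //.
rewrite ltn_sorted_nth ?count_small // count_leq_mem //.
by case: (val s \in es); rewrite ?addn0 ?addn1 ?ltnn ?ltnSn.
Qed.

Lemma stepword_elems : [seq nth 0 (stepword n es (0 :: L)) e | e <- es] = L.
Proof.
apply: (eq_from_nth (x0 := 0)) => [|r]; rewrite size_map ?size_L // => lt_r.
have e_es : nth 0 es r \in es by rewrite mem_nth.
rewrite (nth_map 0) // nth_stepword ?(allP bounded_es) // count_leq_mem // e_es addn1.
by rewrite count_ltn_index // index_uniq.
Qed.

End Values.

Section Rises.

Variable m : seq nat.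
Hypotheses (sorted_m : sorted leq m) (size_m : size m = n).
Hypothesis rises_m : forall s : 'I_n, (val s \in es) = (s \in rises n m).

Let a := 0 :: [seq nth 0 m e | e <- es].

Lemma nth_cons_rises j : j <= n -> nth 0 (0 :: m) j = nth 0 a (count (fun e => e < j) es).
Proof.
elim: j => [|j IH] lt_jn; first by rewrite (@eq_count _ _ pred0) ?count_pred0.
under eq_count => e do rewrite ltnS.
rewrite count_leq_mem //; have [j_es|j_notin] := boolP (j \in es).
  by rewrite addn1 count_ltn_index //= (nth_map 0) ?index_mem // nth_index.
rewrite addn0 -IH 1?ltnW //=; apply/eqP; rewrite eqn_leq.
have := rises_m (Ordinal lt_jn); rewrite inE /= (negbTE j_notin) => /esym/negbT.
rewrite -leqNgt => -> /=.
have path_m : path leq 0 m by case: (m) sorted_m.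
by move/(pathP 0): path_m; apply; rewrite size_m.
Qed.

Lemma stepword_rises : m = stepword n es a.
Proof.
apply: (eq_from_nth (x0 := 0)) => [|j]; rewrite ?size_stepword // size_m => lt_jn.
by rewrite nth_stepword // -[nth 0 m j]/(nth 0 (0 :: m) j.+1) nth_cons_rises.
Qed.

Lemma sorted_rise_values : sorted ltn a.
Proof.
apply/(pathP 0) => r; rewrite size_map => lt_r.
have e_es : nth 0 es r \in es by rewrite mem_nth.
have lt_en : nth 0 es r < n := allP bounded_es _ e_es.
rewrite (nth_map 0) //.
have := rises_m (Ordinal lt_en); rewrite e_es inE /= nth_cons_rises ?(ltnW lt_en) //.
by rewrite count_ltn_index // index_uniq.
Qed.

End Rises.

End StepWord.

Lemma elems_sorted n (T : {set 'I_n}) : sorted ltn (elems T).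
Proof.
rewrite ltn_sorted_uniq_leq sort_uniq (sort_sorted leq_total) andbT.
by rewrite (map_inj_uniq val_inj) enum_uniq.
Qed.

Lemma elems_bounded n (T : {set 'I_n}) : all (fun e => e < n) (elems T).
Proof. by apply/allP => e; rewrite mem_sort => /mapP [i _ ->]; apply: ltn_ord. Qed.

Lemma mem_elems n (T : {set 'I_n}) (s : 'I_n) : (val s \in elems T) = (s \in T).
Proof. by rewrite mem_sort (mem_map val_inj) mem_enum. Qed.

Lemma NE_word_spec n (T : {set 'I_n}) m L : size L = size (elems T) ->
  (sorted ltn (0 :: L) && (sort leq (NE_word n (elems T) L) == m)) =
  [&& sorted leq m, size m == n & T == rises n m] && (L == [seq nth 0 m e | e <- elems T]).
Proof.
move=> size_L; have sorted_es := elems_sorted T; have bounded_es := elems_bounded T.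
rewrite NE_wordE //; apply/idP/idP.
  case/andP=> sorted_L /eqP <-.
  have sorted_W : sorted leq (stepword n (elems T) (0 :: L)) by apply: stepword_sorted.
  rewrite (sorted_sort leq_trans sorted_W) sorted_W size_stepword rises_stepword //.
  rewrite stepword_elems // !eqxx andbT /=.
  by apply/eqP/setP => s; rewrite inE mem_elems.
case/andP=> /and3P [sorted_m /eqP size_m /eqP def_T] /eqP ->.
have rises_m (s : 'I_n) : (val s \in elems T) = (s \in rises n m).
  by rewrite mem_elems def_T.
have sorted_a : sorted ltn (0 :: [seq nth 0 m e | e <- elems T]).
  exact: (@sorted_rise_values n).
have def_m : m = stepword n (elems T) (0 :: [seq nth 0 m e | e <- elems T]).
  exact: (@stepword_rises n).
by rewrite sorted_a -def_m (sorted_sort leq_trans sorted_m) /=; apply/eqP.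
Qed.

Lemma coef_N_rises n (T : {set 'I_n}) m :
  coef_N T m = [&& sorted leq m, size m == n & T == rises n m].
Proof.
rewrite /coef_N (eq_card (B := [pred ix : (size (elems T)).-tuple 'I_(maxl m).+1 |
   [&& sorted leq m, size m == n & T == rises n m] &&
   (map val ix == [seq nth 0 m e | e <- elems T])])); last first.
  by move=> ix; rewrite !inE NE_word_spec // size_map size_tuple.
rewrite card_andbl card_val_tuple ?muln1 ?size_map //.
by apply/allP => x /mapP [e _ ->]; apply: nth_maxl.
Qed.

Lemma coef_L_rises n (D : {set 'I_n}) m :
  coef_L D m = [&& sorted leq m, size m == n & D \subset rises n m].
Proof.
rewrite /coef_L; under eq_bigr => T _ do rewrite coef_N_rises.
rewrite big_mkcond (bigD1 (rises n m)) //= big1 => [|T /negbTE neq_T]; last first.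
  by rewrite neq_T !andbF; case: (D \subset T).
by rewrite eqxx andbT addn0; case: (D \subset rises n m); rewrite ?andbT ?andbF.
Qed.

(** * Signed permutations *)

Definition ascents (n : nat) (w : seq int) : seq bool :=
  [seq (piv w s < piv w s.+1)%R | s <- iota 0 n].

Lemma size_ascents n w : size (ascents n w) = n.
Proof. by rewrite size_map size_iota. Qed.

Lemma nth_ascents n w s : s < n -> nth false (ascents n w) s = (piv w s < piv w s.+1)%R.
Proof. by move=> lt_sn; rewrite (nth_map 0) ?size_iota // nth_iota. Qed.

Lemma mem_val_tuple_set n (t : n.-tuple bool) x :
  (x \in [seq val i | i in [set i : 'I_n | tnth t i]]) = (x < n) && nth false t x.
Proof.
apply/mapP/andP => [[i]|[lt_xn t_x]].
  by rewrite mem_enum inE (tnth_nth false) => t_i ->; split; first exact: ltn_ord.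
by exists (Ordinal lt_xn); rewrite // mem_enum inE (tnth_nth false).
Qed.

Lemma mem_succ_tuple_set n (t : n.-tuple bool) x :
  (x.+1 \in [seq (val i).+1 | i in [set i : 'I_n | tnth t i]]) = (x < n) && nth false t x.
Proof.
rewrite -mem_val_tuple_set -(mem_map succn_inj) -map_comp.
by apply: eq_mem_map => i.
Qed.

Section SignedPermutation.

Variables (n : nat) (w : seq int).
Hypothesis w_perm : is_signed_perm n w.

Lemma signed_perm_size : size w = n.
Proof. by move: (perm_size w_perm); rewrite size_map size_iota. Qed.

Lemma piv_succ_neq s : s < n -> piv w s != piv w s.+1.
Proof.
move=> lt_sn; have uniq_abs : uniq (map absz w) by rewrite (perm_uniq w_perm) iota_uniq.
have abs_gt0 i : i < n -> 0 < absz (nth 0%R w i).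
  move=> lt_in; have : absz (nth 0%R w i) \in iota 1 n.
    by rewrite -(perm_mem w_perm) map_f // mem_nth // signed_perm_size.
  by rewrite mem_iota => /andP [].
case: s lt_sn => [|s] lt_sn /=; apply/eqP => eq_piv.
  by move: (abs_gt0 0 lt_sn); rewrite -eq_piv.
have : nth 0 (map absz w) s == nth 0 (map absz w) s.+1.
  by rewrite !(nth_map 0%R) ?signed_perm_size ?eq_piv //; lia.
by rewrite nth_uniq ?size_map ?signed_perm_size //; lia.
Qed.

Lemma descentE s : s < n -> (piv w s.+1 < piv w s)%R = ~~ nth false (ascents n w) s.
Proof.
move=> lt_sn; rewrite nth_ascents // -leNgt le_eqVlt eq_sym.
by rewrite (negbTE (piv_succ_neq lt_sn)).
Qed.

Lemma peak_ascents s : s.+1 < n ->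
  nth false (ascents n w) s && ~~ nth false (ascents n w) s.+1 =
  (piv w s < piv w s.+1)%R && (piv w s.+2 < piv w s.+1)%R.
Proof. by move=> lt_sn; rewrite -(descentE lt_sn) nth_ascents // ltnW. Qed.

Lemma signed_perm0 : n = 0 -> w = [::].
Proof. by move=> n0; apply/size0nil; rewrite signed_perm_size. Qed.

Lemma npeaks_ascents : npeaks true (ascents n w) = peB n w + varsigma w.
Proof.
rewrite npeaksE size_ascents /peB /PeB size_filter /varsigma.
have [n0|n_gt0] := posnP n; first by rewrite n0 (signed_perm0 n0).
have iota_n : iota 0 n = 0 :: iota (1 + 0) n.-1 by rewrite -{1}(prednK n_gt0).
rewrite iota_n [count _ (_ :: _)]/= -(descentE n_gt0) iotaDl !count_map addnC.
congr (_ + _); apply: eq_in_count => s; rewrite mem_iota add0n => /andP [_ lt_sn].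
by rewrite /= peak_ascents //; lia.
Qed.

Lemma admissible_tuple (t : n.-tuple bool) :
  admissible w [set i : 'I_n | tnth t i] =
  all (fun s => (nth false (true :: ascents n w) s && ~~ nth false (ascents n w) s) ==>
                (nth false t s != nth false (false :: t) s)) (iota 0 n).
Proof.
rewrite /admissible /PeB all_filter.
have [n0|n_gt0] := posnP n.
  have iota_n : iota 0 n = [::] by rewrite n0.
  have iota_pn : iota 1 n.-1 = [::] by rewrite n0.
  by rewrite iota_n iota_pn /piv (signed_perm0 n0).
have iota_n : iota 0 n = 0 :: iota (1 + 0) n.-1 by rewrite -{1}(prednK n_gt0).
rewrite iota_n [all _ (_ :: _)]/= -(descentE n_gt0) mem_val_tuple_set n_gt0 andbC.
rewrite iotaDl !all_map; congr andb; first by case: (nth false t 0).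
apply: eq_in_all => s; rewrite mem_iota add0n => /andP [_ lt_sn].
have lt_s1n : s.+1 < n by lia.
rewrite /= peak_ascents // mem_val_tuple_set mem_succ_tuple_set !add0n add1n lt_s1n ltnW //=.
by case: (nth false t s.+1); case: (nth false t s).
Qed.

Lemma dB_valid_zchain c : size c = n -> dB_valid n w c = zchain 0 (ascents n w) c.
Proof.
move=> size_c; rewrite zchainP size_ascents size_c eqxx /=.
apply/forallP/allP => [valid s|valid s].
  rewrite mem_iota => /andP [_ lt_sn]; have := valid (Ordinal lt_sn).
  by rewrite /= (descentE lt_sn) nth_ascents.
have := valid s; rewrite mem_iota ltn_ord /= => /(_ isT).
by rewrite (descentE (ltn_ord s)) nth_ascents.
Qed.

End SignedPermutation.

Lemma sorted_sizeE (m : seq nat) n : (sorted leq m && (size m == n)) =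
  (size m == n) && all (fun s => nth 0 (0 :: m) s <= nth 0 m s) (iota 0 n).
Proof.
have [<-|] := eqVneq (size m) n; rewrite ?andbF ?andbT //.
have -> : sorted leq m = path leq 0 m by case: m.
apply/(pathP 0)/allP => [sorted_m s|sorted_m s lt_s]; last by apply: sorted_m; rewrite mem_iota.
by rewrite mem_iota => /andP [_ /sorted_m].
Qed.

Lemma subset_rises_tuple n m (t : n.-tuple bool) :
  ([set i : 'I_n | tnth t i] \subset rises n m) =
  all (fun s => nth false t s ==> (nth 0 (0 :: m) s < nth 0 m s)) (iota 0 n).
Proof.
apply/subsetP/allP => [sub_t s|all_t s].
  rewrite mem_iota => /andP [_ lt_sn]; have := sub_t (Ordinal lt_sn).
  by rewrite !inE (tnth_nth false) /=; case: (nth false t s) => // /(_ isT).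
rewrite !inE (tnth_nth false) => t_s; have := all_t s.
by rewrite mem_iota ltn_ord t_s => /(_ isT).
Qed.

Lemma coef_dB_nchains n w m : is_signed_perm n w ->
  coef_dB n w m = nchains n (2 * maxl m).+1 0 (ascents n w) m.
Proof.
move=> w_perm; apply: eq_card => a; rewrite !inE.
rewrite dB_valid_zchain ?size_map ?size_tuple //.
have [/zchain_path chain_a|] //= := boolP (zchain _ _ _).
rewrite sorted_sort //; first exact: leq_trans.
by rewrite sorted_map; apply: sub_sorted (path_sorted chain_a) => x y; apply: uphalf_leq.
Qed.

Lemma sum_admissible_ndchains n w m : is_signed_perm n w ->
  \sum_(D : {set 'I_n} | admissible w D) coef_L D m =
  ndchains n 0 false true (ascents n w) m.
Proof.
move=> w_perm; under eq_bigr => D _ do rewrite coef_L_rises.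
rewrite sum_nat_bool card_set_tuple; apply: eq_card => t; rewrite !inE.
rewrite dchainP size_ascents size_tuple eqxx admissible_tuple //.
rewrite (andbA (sorted leq m)) sorted_sizeE subset_rises_tuple /=.
by case: (all _ _); case: (size m == n); case: (all _ _); case: (all _ _).
Qed.

Theorem theorem6p6 (n : nat) (w : seq int) :
  is_signed_perm n w ->
  forall m : seq nat,
    coef_dB n w m =
    2 ^ (peB n w + varsigma w) *
    \sum_(D : {set 'I_n} | admissible w D) coef_L D m.
Proof.
move=> w_perm m.
have small_m : all (fun v => v.*2 < (2 * maxl m).+1) m.
  by apply/allP => v /(nth_index 0) <-; rewrite ltnS -mul2n leq_mul2l nth_maxl.
rewrite coef_dB_nchains // sum_admissible_ndchains // -npeaks_ascents //.
rewrite -{1}(size_ascents n w) (@nchains_wcount _ _ m 0 0 small_m erefl).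
by rewrite -ndchains_wcount size_ascents mulnC.
Qed.
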